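(* Let $X$ be a fake weighted projective space with weights $(\lambda_0,\ldots,\lambda_n)$, ordered so that $\lambda_0\leq\lambda_1\leq\cdots\leq\lambda_n$, with $\gcd\{\lambda_0,\ldots,\lambda_n\}=1$, and suppose $X$ has at worst canonical singularities. Let $h:=\sum_{i=0}^n\lambda_i$. Then for every $k\in\{2,\ldots,n\}$, $$\frac{\lambda_k}{h}\leq\frac{1}{n-k+2},$$ and the inequality is strict if $X$ has at worst terminal singularities.
   Context: Let $N\cong\mathbb{Z}^n$ be a lattice and $N_\mathbb{R}:=N\otimes_\mathbb{Z}\mathbb{R}$. Let $\rho_0,\ldots,\rho_n\in N$ be primitive lattice points with $N_\mathbb{R}=\sum_{i=0}^n\mathbb{R}_{\geq0}\rho_i$. There are positive integers $\lambda_0,\ldots,\lambda_n$ with $\gcd\{\lambda_0,\ldots,\lambda_n\}=1$, unique up to order, such that $\sum_{i=0}^n\lambda_i\rho_i=0$. The cones $\sigma_i$ generated by $\{\rho_j: j\neq i\}$ generate a complete simplicial fan; the associated projective toric variety $X$ is called a fake weighted projective space with weights $(\lambda_0,\ldots,\lambda_n)$. *)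

From HB Require Import structures.
From mathcomp Require Import all_boot all_order all_algebra.
Set Implicit Arguments. Unset Strict Implicit. Unset Printing Implicit Defensive.
Import Order.TTheory GRing.Theory Num.Theory.
Local Open Scope ring_scope.

(* The lattice N = Z^n is 'rV[int]_n; N_Q = 'rV[rat]_n. *)
Definition ratv n (v : 'rV[int]_n) : 'rV[rat]_n := map_mx (fun z : int => z%:~R) v.

(* v is a primitive lattice point: v is not k * w for an integer k <> 1, k >= 0
   (this also forces v <> 0). *)
Definition primitive n (v : 'rV[int]_n) : Prop :=
  forall (k : nat) (w : 'rV[int]_n), v = (k%:Z) *: w -> k = 1%N.

(* The rho_i positively span N_R (equivalently N_Q, the rho_i being rational). *)
Definition pos_spanning n (rho : 'I_n.+1 -> 'rV[int]_n) : Prop :=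
  forall v : 'rV[rat]_n, exists c : 'I_n.+1 -> rat,
    (forall j, 0 <= c j) /\ v = \sum_j c j *: ratv (rho j).

(* c expresses the lattice point v as a nonnegative combination of the rays of
   sigma_i = cone(rho_j : j <> i); then u_{sigma_i}(v) = \sum_j c j. *)
Definition cone_coeffs n (rho : 'I_n.+1 -> 'rV[int]_n) (i : 'I_n.+1)
    (v : 'rV[int]_n) (c : 'I_n.+1 -> rat) : Prop :=
  c i = 0 /\ (forall j, 0 <= c j) /\ ratv v = \sum_j c j *: ratv (rho j).

(* Toric (Reid) criterion: canonical iff every nonzero lattice point v of each
   maximal cone sigma_i satisfies u_{sigma_i}(v) >= 1. *)
Definition fwps_canonical n (rho : 'I_n.+1 -> 'rV[int]_n) : Prop :=
  forall i v c, cone_coeffs rho i v c -> v != 0 -> 1 <= \sum_j c j.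

(* terminal iff the only lattice points of sigma_i with u_{sigma_i}(v) <= 1 are
   0 and the ray generators. *)
Definition fwps_terminal n (rho : 'I_n.+1 -> 'rV[int]_n) : Prop :=
  forall i v c, cone_coeffs rho i v c -> v != 0 -> (forall j, v != rho j) ->
    1 < \sum_j c j.

From HB Require Import structures.
From mathcomp Require Import all_boot all_order all_algebra.
Set Implicit Arguments. Unset Strict Implicit. Unset Printing Implicit Defensive.
Import Order.TTheory GRing.Theory Num.Theory.
Local Open Scope ring_scope.

(* Fix k >= 2 and consider the lattice point
     w = rho_k + rho_(k+1) + ... + rho_n.
   Using the relation \sum_j lambda_j rho_j = 0 we rewrite
     - w = \sum_j (lambda_j / lambda_k - [k <= j]) rho_j,
   a combination in which rho_k has coefficient 0 and, the weights being
   sorted, every coefficient is nonnegative.  Hence - w lies in the cone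
   sigma_k, with u_(sigma_k)(- w) = h / lambda_k - (n - k + 1).
   Because the rays span N_Q, the rational relations among them form the line
   spanned by lambda; so a nonnegative relation vanishing at one index and not
   at another cannot exist.  This shows that - w is nonzero and is not a ray
   generator.  The canonical (resp. terminal) criterion then gives
   u_(sigma_k)(- w) >= 1 (resp. > 1), which is exactly the claimed bound on
   lambda_k / h. *)

Lemma ratv_comb n m (a : 'I_m -> int) (v : 'I_m -> 'rV[int]_n) :
  ratv (\sum_i a i *: v i) = \sum_i (a i)%:~R *: ratv (v i).
Proof.
apply/matrixP => x y; rewrite !mxE summxE rmorph_sum summxE.
by apply: eq_bigr => i _; rewrite !mxE rmorphM.
Qed.

Lemma ratv_relation n m (a : 'I_m -> nat) (v : 'I_m -> 'rV[int]_n) :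
  \sum_i (a i)%:Z *: v i = 0 -> \sum_i (a i)%:R *: ratv (v i) = 0.
Proof.
move=> rel; rewrite -[LHS](ratv_comb (fun i => (a i)%:Z)) rel.
by apply/matrixP => x y; rewrite !mxE.
Qed.

Section RelationsAmongRays.

Variables (n : nat) (rho : 'I_n.+1 -> 'rV[int]_n) (lambda : 'I_n.+1 -> nat).
Hypothesis Hspan : pos_spanning rho.
Hypothesis Hpos : forall i, (0 < lambda i)%N.
Hypothesis Hrel : \sum_(i < n.+1) (lambda i)%:Z *: rho i = 0.

Let M : 'M[rat]_(n.+1, n) := \matrix_i ratv (rho i).

Let combE (u : 'rV[rat]_n.+1) : u *m M = \sum_i u 0 i *: ratv (rho i).
Proof. by rewrite mulmx_sum_row; apply: eq_bigr => i _; rewrite rowK. Qed.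

(* The rays span N_Q, so M has full column rank n. *)
Let rays_row_full : row_full M.
Proof.
rewrite -sub1mx; apply/row_subP => i.
have [c [_ Hc]] := Hspan (row i 1%:M).
apply/submxP; exists (\row_j c j); rewrite combE Hc.
by apply: eq_bigr => j _; rewrite mxE.
Qed.

(* Every rational relation among the rays is a multiple of the weight relation:
   the kernel of M is one-dimensional and contains lambda. *)
Lemma relation_proportional (c : 'I_n.+1 -> rat) :
  \sum_i c i *: ratv (rho i) = 0 -> exists a, forall i, c i = a * (lambda i)%:R.
Proof.
move=> rel.
pose l : 'rV[rat]_n.+1 := \row_i (lambda i)%:R.
have lK : (l <= kermx M)%MS.
  apply/sub_kermxP; rewrite combE -[RHS](ratv_relation Hrel).
  by apply: eq_bigr => i _; rewrite mxE.
have l_neq0 : l != 0.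
  apply/eqP => /matrixP /(_ 0 ord0); rewrite !mxE => /eqP.
  by rewrite pnatr_eq0 eqn0Ngt Hpos.
have kerK : (kermx M <= l)%MS.
  rewrite -(mxrank_leqif_sup lK) mxrank_ker (eqnP rays_row_full) subSnn.
  by rewrite rank_rV l_neq0.
have cK : (\row_i c i <= kermx M)%MS.
  by apply/sub_kermxP; rewrite combE -[RHS]rel; apply: eq_bigr => i _; rewrite mxE.
have [a Ha] := sub_rVP (submx_trans cK kerK).
by exists a => i; move/matrixP: Ha => /(_ 0 i); rewrite !mxE.
Qed.

Lemma no_partial_relation (a : 'I_n.+1 -> nat) (i0 i1 : 'I_n.+1) :
  a i0 = 0%N -> (0 < a i1)%N -> \sum_i (a i)%:Z *: rho i != 0.
Proof.
move=> a0 a1; apply/eqP => /ratv_relation /relation_proportional [c Hc].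
have c0 : c = 0.
  move: (Hc i0); rewrite a0 => /esym /eqP.
  by rewrite mulf_eq0 pnatr_eq0 eqn0Ngt Hpos orbF => /eqP.
by move: (Hc i1); rewrite c0 mul0r => /eqP; rewrite pnatr_eq0 eqn0Ngt a1.
Qed.

End RelationsAmongRays.

Lemma sum_tail_indicator (m k : nat) : (\sum_(j < m) (k <= j) = m - k)%N.
Proof.
elim: m => [|m IH]; first by rewrite big_ord0.
rewrite big_ord_recr /= IH; case: (leqP k m) => km.
  by rewrite subSn // addn1.
by rewrite addn0 (eqnP (ltnW km)) (eqnP km).
Qed.

Lemma ratio_bound_iff (a H m : nat) : (0 < a)%N -> (0 < H)%N ->
  ((a%:R / H%:R <= 1 / m.+1%:R :> rat) = (1 <= H%:R / a%:R - m%:R :> rat)) /\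
  ((a%:R / H%:R < 1 / m.+1%:R :> rat) = (1 < H%:R / a%:R - m%:R :> rat)).
Proof.
move=> a0 H0.
have ratio_pos : 0 < H%:R / a%:R :> rat by rewrite divr_gt0 ?ltr0n.
have succ_pos : 0 < m.+1%:R :> rat by rewrite ltr0n.
rewrite lerBrDr ltrBrDr addrC natr1 div1r -[a%:R / H%:R]invf_div.
by rewrite lef_pV2 ?ltf_pV2 ?posrE.
Qed.

Section TailVector.

Variables (n : nat) (rho : 'I_n.+1 -> 'rV[int]_n) (lambda : 'I_n.+1 -> nat).
Hypothesis Hspan : pos_spanning rho.
Hypothesis Hpos : forall i, (0 < lambda i)%N.
Hypothesis Hrel : \sum_(i < n.+1) (lambda i)%:Z *: rho i = 0.
Hypothesis Hsorted :
  forall i j : 'I_n.+1, (i <= j)%N -> (lambda i <= lambda j)%N.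
Variable k : 'I_n.+1.
Hypothesis Hk : (2 <= k)%N.

Definition tail_vector : 'rV[int]_n := \sum_(i < n.+1) (k <= i)%:Z *: rho i.

(* Coordinates of - w with respect to the rays of sigma_k. *)
Definition tail_coeffs (j : 'I_n.+1) : rat :=
  (lambda j)%:R / (lambda k)%:R - (k <= j)%:R.

Lemma tail_cone_coeffs : cone_coeffs rho k (- tail_vector) tail_coeffs.
Proof.
have lk_gt0 : 0 < (lambda k)%:R :> rat by rewrite ltr0n.
rewrite /tail_coeffs; split; [|split].
- by rewrite leqnn divff // gt_eqF.
- move=> j; case: leqP => kj; last by rewrite subr0 divr_ge0.
  by rewrite subr_ge0 ler_pdivlMr // mul1r ler_nat Hsorted.
- under eq_bigr do rewrite scalerBl.
  rewrite sumrB /ratv map_mxN -/(ratv _) ratv_comb.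
  under [X in X - _]eq_bigr do rewrite mulrC -scalerA.
  by rewrite -scaler_sumr (ratv_relation Hrel) scaler0 sub0r.
Qed.

Lemma tail_coeffs_sum :
  \sum_j tail_coeffs j =
    (\sum_(i < n.+1) lambda i)%N%:R / (lambda k)%:R - (n.+1 - k)%N%:R.
Proof.
by rewrite sumrB -mulr_suml -!natr_sum sum_tail_indicator.
Qed.

Let small_before_k (i : nat) : (i <= 1)%N -> (i < k)%N.
Proof. by move=> i1; apply: leq_trans Hk. Qed.

Lemma tail_vector_neq0 : - tail_vector != 0.
Proof.
rewrite oppr_eq0; apply: (no_partial_relation Hspan Hpos Hrel (i0 := ord0) (i1 := ord_max)).
- by rewrite leqNgt small_before_k.
- by rewrite lt0b -ltnS ltn_ord.
Qed.

(* - w is not a ray generator: otherwise w + rho_j = 0 would be a relation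
   vanishing at an index i0 in {0, 1} distinct from j. *)
Lemma tail_vector_not_ray (j : 'I_n.+1) : - tail_vector != rho j.
Proof.
have one_lt : (1 < n.+1)%N := leq_trans Hk (ltnW (ltn_ord k)).
pose i0 : 'I_n.+1 := if j == ord0 then Ordinal one_lt else ord0.
have i0j : i0 != j.
  by rewrite /i0; have [->|j_neq0] := eqVneq j ord0; last rewrite eq_sym.
have i0_before_k : (i0 < k)%N by apply: small_before_k; rewrite /i0; case: ifP.
rewrite eq_sym -subr_eq0 opprK.
have -> : rho j + tail_vector = \sum_(i < n.+1) ((k <= i) + (i == j))%N%:Z *: rho i.
  under [RHS]eq_bigr do rewrite PoszD scalerDl.
  rewrite big_split /= addrC; congr (_ + _).
  by rewrite (bigD1 j) //= eqxx scale1r big1 ?addr0 // => i /negbTE ->; rewrite scale0r.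
apply: (no_partial_relation Hspan Hpos Hrel (i0 := i0) (i1 := ord_max)).
- by rewrite leqNgt i0_before_k (negbTE i0j).
- by rewrite addn_gt0 lt0b -ltnS ltn_ord.
Qed.

End TailVector.

Theorem mainTheorem12 (n : nat) (rho : 'I_n.+1 -> 'rV[int]_n)
    (lambda : 'I_n.+1 -> nat)
    (Hprim : forall i, primitive (rho i))
    (Hspan : pos_spanning rho)
    (Hpos : forall i, (0 < lambda i)%N)
    (Hgcd : (\big[gcdn/0%N]_(i < n.+1) lambda i)%N = 1%N)
    (Hrel : \sum_(i < n.+1) (lambda i)%:Z *: rho i = 0)
    (Hsorted : forall i j : 'I_n.+1, (i <= j)%N -> (lambda i <= lambda j)%N)
    (Hcan : fwps_canonical rho) :
  let h := (\sum_(i < n.+1) lambda i)%N in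
  forall k : 'I_n.+1, (2 <= k)%N ->
    ((lambda k)%:R / h%:R <= 1 / ((n - k + 2)%N)%:R :> rat) /\
    (fwps_terminal rho ->
       (lambda k)%:R / h%:R < 1 / ((n - k + 2)%N)%:R :> rat).
Proof.
move=> h k Hk.
have h_gt0 : (0 < h)%N by rewrite /h (bigD1 k) //= ltn_addr.
have -> : (n - k + 2 = (n.+1 - k).+1)%N.
  by rewrite addn2 subSn // -ltnS ltn_ord.
have [-> ->] := ratio_bound_iff (n.+1 - k) (Hpos k) h_gt0.
have cone := tail_cone_coeffs Hpos Hrel Hsorted.
have tail_neq0 := tail_vector_neq0 Hspan Hpos Hrel Hk.
rewrite -(tail_coeffs_sum _ k); split; first exact: Hcan (cone k) tail_neq0.
move=> Hterm; apply: Hterm (cone k) tail_neq0 _.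
exact: tail_vector_not_ray.
Qed.
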